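(* For the Lr $(\mathbf a,\tau)$ interval exchange transformation $T$ and its dual $\tilde T$ (with no further hypotheses), the associated subshift satisfies $X=\mathcal I([0,1))\cup\tilde{\mathcal I}((0,1])$.
   Context: Fix $n\ge 2$, $[n]=\{1,\dots,n\}$, a vector $\mathbf a=(a_1,\dots,a_n)$ with all $a_i>0$ and $\sum_i a_i=1$, and a permutation $\tau$ of $[n]$. Put $b_0=0$, $b_i=\sum_{j=1}^i a_j$, $J_i=[b_{i-1},b_i)$, $\tilde J_i=(b_{i-1},b_i]$, $D=\{b_1,\dots,b_{n-1}\}$, $b^\tau_0=0$, $b^\tau_i=\sum_{j=1}^i a_{\tau^{-1}(j)}$. $T:[0,1)\to[0,1)$ and $\tilde T:(0,1]\to(0,1]$ are defined by $x\mapsto x-b_{i-1}+b^\tau_{\tau(i)-1}$ for $x\in J_i$ (resp. $x\in\tilde J_i$); both are bijections. $\Omega=[n]^{\mathbb Z}$ with the product topology. The itinerary maps are $\mathcal I(x)_k=i\iff T^kx\in J_i$ and $\tilde{\mathcal I}(x)_k=i\iff\tilde T^kx\in\tilde J_i$ ($k\in\mathbb Z$). $D_\infty=\{0,1\}\cup\bigcup_{k\in\mathbb Z}T^k(D)$, $R=[0,1]\setminus D_\infty$, $X_0=\mathcal I(R)$, $X=\overline{X_0}$ (closure in $\Omega$). *)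

From HB Require Import structures.
From mathcomp Require Import all_boot all_order all_algebra all_fingroup.
From mathcomp Require Import all_classical all_reals all_analysis.
Set Implicit Arguments. Unset Strict Implicit. Unset Printing Implicit Defensive.
Import Order.TTheory GRing.Theory Num.Theory.
Local Open Scope classical_set_scope.
Local Open Scope ring_scope.

(* Conventions (0-indexed): the alphabet [n] = {1,..,n} is represented by
   'I_n = {0,..,n-1}, letter i : 'I_n standing for i+1.
   a : 'I_n -> R, tau : {perm 'I_n}. *)

Section IET.
Variables (R : realType) (n : nat) (a : 'I_n -> R) (tau : {perm 'I_n}).

Definition bb (k : nat) : R := \sum_(j < n | (j < k)%N) a j.
Definition bbtau (k : nat) : R := \sum_(j < n | (j < k)%N) a ((tau^-1)%g j).

(* J_i = [b_{i-1}, b_i)  and  ~J_i = (b_{i-1}, b_i]  (1-indexed);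
   here for i : 'I_n (0-indexed) : [bb i, bb i.+1) and (bb i, bb i.+1]. *)
Definition J (i : 'I_n) : set R := [set x | bb i <= x < bb i.+1].
Definition Jt (i : 'I_n) : set R := [set x | bb i < x <= bb i.+1].

(* x |-> x - b_{i-1} + b^tau_{tau(i)-1} for x in J_i (resp. ~J_i) *)
Definition Tmap (x : R) : R :=
  \sum_(i < n) (if (bb i <= x) && (x < bb i.+1)
                then x - bb i + bbtau (tau i) else 0).
Definition Ttmap (x : R) : R :=
  \sum_(i < n) (if (bb i < x) && (x <= bb i.+1)
                then x - bb i + bbtau (tau i) else 0).

Definition dom0 : set R := [set x | 0 <= x < 1].
Definition dom1 : set R := [set x | 0 < x <= 1].

Definition Tinv (y : R) : R := xget 0 [set x | dom0 x /\ Tmap x = y].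
Definition Ttinv (y : R) : R := xget 0 [set x | dom1 x /\ Ttmap x = y].

Definition Tpow (k : int) (x : R) : R :=
  match k with Posz m => iter m Tmap x | Negz m => iter m.+1 Tinv x end.
Definition Ttpow (k : int) (x : R) : R :=
  match k with Posz m => iter m Ttmap x | Negz m => iter m.+1 Ttinv x end.

Definition Omega := {ptws int -> discrete_topology 'I_n}.

Definition is_itin (x : R) (w : Omega) : Prop := forall k : int, J (w k) (Tpow k x).
Definition is_itint (x : R) (w : Omega) : Prop := forall k : int, Jt (w k) (Ttpow k x).
Definition Itin (S : set R) : set Omega := [set w | exists2 x, S x & is_itin x w].
Definition Itint (S : set R) : set Omega := [set w | exists2 x, S x & is_itint x w].

Definition Dset : set R := [set bb k | k in [set k : nat | (1 <= k <= n.-1)%N]].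
Definition Dinf : set R :=
  [set 0; 1] `|` \bigcup_(k in [set: int]) (Tpow k @` Dset).
Definition Rgood : set R := [set x | 0 <= x <= 1] `\` Dinf.
Definition X0 : set Omega := Itin Rgood.
Definition Xsub : set Omega := closure X0.

End IET.

From HB Require Import structures.
From mathcomp Require Import all_boot all_order all_algebra all_fingroup.
From mathcomp Require Import all_classical all_reals all_analysis.
From mathcomp Require Import lra zify.
Set Implicit Arguments. Unset Strict Implicit. Unset Printing Implicit Defensive.
Import Order.TTheory GRing.Theory Num.Theory.
Import numFieldNormedType.Exports.
Local Open Scope classical_set_scope.
Local Open Scope ring_scope.

(* Both inclusions rest on one local fact: near every point x of its domain,
   on the side of the closed ends of the cells, every power of T (resp. ~T)
   is a translation, so points slightly to the right (resp. left) of x share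
   any finite window of the itinerary of x.  Generic points (the set R) have
   the same T- and ~T-itineraries and are dense, their complement D_oo being
   countable.
   - If w is an itinerary of x, each window of w is the window of a generic
     point near x on the correct side, so w lies in the closure X of X0.
   - If w is not an itinerary, then every x in [0,1] has a neighbourhood on
     each side whose generic itineraries all miss w at a fixed letter;
     compactness of [0,1] bounds these letters uniformly, which yields a
     cylinder neighbourhood of w disjoint from X0. *)

(* Half-open cells.  [cell b l r x] means x \in [l, r) if b is true and
   x \in (l, r] if b is false; the boolean b selects the transformation T
   (left-closed intervals J_i) or its dual ~T (right-closed intervals ~J_i). *)
Section Cells.
Variable R : realFieldType.

Definition cell (b : bool) (l r x : R) : bool :=
  if b then (l <= x) && (x < r) else (l < x) && (x <= r).

(* The direction pointing into a cell from its closed end: right for [l, r),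
   left for (l, r]. *)
Definition push (b : bool) (d : R) : R := if b then d else - d.

Lemma cell_widen b l r l' r' x :
  l' <= l -> r <= r' -> cell b l r x -> cell b l' r' x.
Proof. by case: b => ll rr /= /andP[lx xr]; apply/andP; split; lra. Qed.

Lemma cell_translate b l h l' x :
  cell b l (l + h) x -> cell b l' (l' + h) (x - l + l').
Proof. by case: b => /= /andP[lx xr]; apply/andP; split; lra. Qed.

Lemma cell_split b l m r x :
  l <= m -> m <= r -> cell b l r x -> cell b l m x || cell b m r x.
Proof.
move=> lm mr; case: b => /= /andP[lx xr].
  by case: (ltP x m) => xm; apply/orP; [left | right]; apply/andP; split; lra.
by case: (leP x m) => xm; apply/orP; [left | right]; apply/andP; split; lra.
Qed.

Lemma cell_disjoint b l1 r1 l2 r2 x :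
  r1 <= l2 -> cell b l1 r1 x -> cell b l2 r2 x -> False.
Proof. by case: b => h /= /andP[? ?] /andP[? ?]; lra. Qed.

Lemma cell_interior b l r x :
  x != l -> x != r -> cell b l r x = (l < x) && (x < r).
Proof.
move=> xl xr; have lx : (l < x) = (l <= x) by rewrite lt_neqAle eq_sym xl.
have xr' : (x < r) = (x <= r) by rewrite lt_neqAle xr.
by case: b; rewrite /= lx xr'.
Qed.

Lemma cell_push b l r y : cell b l r y ->
  exists2 e, 0 < e & forall d, 0 <= d < e -> cell b l r (y + push b d).
Proof.
case: b => /= /andP[ly yr].
  by exists (r - y) => [|d /andP[d0 de]]; [lra | apply/andP; split; lra].
by exists (y - l) => [|d /andP[d0 de]]; [lra | apply/andP; split; lra].
Qed.

End Cells.

Section PrefixSums.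
Variables (R : realType) (n : nat) (c : 'I_n -> R).
Hypothesis c_gt0 : forall i, 0 < c i.
Hypothesis c_sum1 : \sum_(i < n) c i = 1.

Lemma bb0 : bb c 0 = 0.
Proof. by rewrite /bb big_pred0. Qed.

Lemma bb_split (i j : nat) : (i <= j)%N ->
  bb c j = bb c i + \sum_(k < n | (i <= k < j)%N) c k.
Proof.
move=> ij; rewrite /bb (bigID (fun k : 'I_n => (k < i)%N)) /=; congr (_ + _).
  apply: eq_bigl => k; apply/idP/idP; first by case/andP.
  by move=> ki; rewrite ki andbT (leq_trans ki ij).
by apply: eq_bigl => k; rewrite -leqNgt andbC.
Qed.

Lemma bb_le (i j : nat) : (i <= j)%N -> bb c i <= bb c j.
Proof.
by move=> ij; rewrite (bb_split ij) lerDl; apply: sumr_ge0 => k _; apply: ltW.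
Qed.

Lemma bbS (i : 'I_n) : bb c i.+1 = bb c i + c i.
Proof.
rewrite (bb_split (leqnSn i)) (bigD1 i) /= ?leqnn ?ltnSn //.
rewrite big1 ?addr0 // => k /andP[/andP[ik ki] kni].
by move: kni; rewrite -(inj_eq val_inj) /= eqn_leq ik -ltnS ki.
Qed.

Lemma bb_top (k : nat) : (n <= k)%N -> bb c k = 1.
Proof.
by move=> nk; rewrite /bb -c_sum1; apply: eq_bigl => j; rewrite (leq_trans _ nk).
Qed.

Lemma cell_locate b y : cell b 0 1 y -> exists i : 'I_n, cell b (bb c i) (bb c i.+1) y.
Proof.
have locate_prefix k : (k <= n)%N -> cell b (bb c 0) (bb c k) y ->
    exists i : 'I_n, cell b (bb c i) (bb c i.+1) y.
  elim: k => [|k IH] kn; first by rewrite bb0; case: b => /= /andP[]; lra.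
  move=> yk1; have /orP[yk | yk] := cell_split (bb_le (leq0n k)) (bb_le (leqnSn k)) yk1.
  - exact: IH (ltnW kn) yk.
  - by exists (Ordinal kn).
by move=> y01; apply: (locate_prefix n) => //; rewrite bb0 bb_top.
Qed.

Lemma cell_uniq b (i j : 'I_n) y :
  cell b (bb c i) (bb c i.+1) y -> cell b (bb c j) (bb c j.+1) y -> i = j.
Proof.
move=> yi yj; apply: val_inj; case: (ltngtP i j) => // [ij | ji].
  by case: (cell_disjoint (bb_le ij) yi yj).
by case: (cell_disjoint (bb_le ji) yj yi).
Qed.

Lemma cell_unit b (i : 'I_n) y : cell b (bb c i) (bb c i.+1) y -> cell b 0 1 y.
Proof. by apply: cell_widen; rewrite -?bb0 ?bb_le // -(bb_top (leqnn n)) bb_le. Qed.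

End PrefixSums.

Section Exchange.
Variables (R : realType) (n : nat) (a : 'I_n -> R) (tau : {perm 'I_n}).
Hypothesis a_gt0 : forall i, 0 < a i.
Hypothesis a_sum1 : \sum_(i < n) a i = 1.

(* The lengths in the order in which the exchanged intervals are laid out:
   the b^tau_k are the prefix sums of this weight vector. *)
Definition atau (j : 'I_n) : R := a ((tau^-1)%g j).

Lemma atau_gt0 j : 0 < atau j.
Proof. exact: a_gt0. Qed.

Lemma atau_sum1 : \sum_(j < n) atau j = 1.
Proof.
rewrite -a_sum1 /atau (reindex_inj (@perm_inj _ tau)) /=.
by apply: eq_bigr => i _; rewrite permK.
Qed.

Lemma bbtau_atau k : bbtau a tau k = bb atau k.
Proof. by []. Qed.

Lemma bbtauS (i : 'I_n) : bbtau a tau (tau i).+1 = bbtau a tau (tau i) + a i.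
Proof. by have := bbS atau (tau i); rewrite /atau permK. Qed.

Definition iet (b : bool) (x : R) : R :=
  \sum_(i < n) (if cell b (bb a i) (bb a i.+1) x
                then x - bb a i + bbtau a tau (tau i) else 0).
Definition iet_inv (b : bool) (y : R) : R :=
  xget 0 [set x | cell b 0 1 x /\ iet b x = y].
Definition iet_pow (b : bool) (k : int) (x : R) : R :=
  match k with Posz m => iter m (iet b) x | Negz m => iter m.+1 (iet_inv b) x end.

Lemma Tpow_iet : Tpow a tau = iet_pow true.
Proof. by []. Qed.

(* On the i-th cell only the i-th term of the defining sum survives. *)
Lemma iet_on b (i : 'I_n) x : cell b (bb a i) (bb a i.+1) x ->
  iet b x = x - bb a i + bbtau a tau (tau i).
Proof.
move=> xi; rewrite /iet (bigD1 i) //= xi big1 ?addr0 // => j ji.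
by case: ifP => // xj; move: ji; rewrite (cell_uniq a_gt0 xj xi) eqxx.
Qed.

Lemma iet_cell b (i : 'I_n) x : cell b (bb a i) (bb a i.+1) x ->
  cell b (bbtau a tau (tau i)) (bbtau a tau (tau i).+1) (iet b x).
Proof.
by move=> xi; rewrite (iet_on xi) bbtauS; apply: cell_translate; rewrite -bbS.
Qed.

Lemma iet_dom b x : cell b 0 1 x -> cell b 0 1 (iet b x).
Proof.
by case/(cell_locate a_gt0 a_sum1) => i /iet_cell /(cell_unit atau_gt0 atau_sum1).
Qed.

Lemma iet_inj b x y : cell b 0 1 x -> cell b 0 1 y -> iet b x = iet b y -> x = y.
Proof.
case/(cell_locate a_gt0 a_sum1) => i xi; case/(cell_locate a_gt0 a_sum1) => j yj E.
have xj := iet_cell xi; rewrite E in xj.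
have tij := cell_uniq atau_gt0 xj (iet_cell yj).
have ij : i = j by apply: (@perm_inj _ tau).
by subst j; move: E; rewrite (iet_on xi) (iet_on yj) => E; lra.
Qed.

Lemma iet_surj b y : cell b 0 1 y -> exists2 x, cell b 0 1 x & iet b x = y.
Proof.
case/(cell_locate atau_gt0 atau_sum1) => j; rewrite -!bbtau_atau.
have [i <-] : exists i, tau i = j by exists ((tau^-1)%g j); rewrite permKV.
rewrite bbtauS => yi.
have xi : cell b (bb a i) (bb a i.+1) (y - bbtau a tau (tau i) + bb a i).
  by rewrite bbS; apply: cell_translate.
exists (y - bbtau a tau (tau i) + bb a i); first exact (cell_unit a_gt0 a_sum1 xi).
by rewrite (iet_on xi); lra.
Qed.

Lemma iet_invP b y : cell b 0 1 y ->
  cell b 0 1 (iet_inv b y) /\ iet b (iet_inv b y) = y.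
Proof.
case/iet_surj => x x01 xy.
by have /(xgetPex 0) : exists x, cell b 0 1 x /\ iet b x = y by exists x.
Qed.

Lemma iet_inv_dom b y : cell b 0 1 y -> cell b 0 1 (iet_inv b y).
Proof. by case/iet_invP. Qed.

Lemma iet_invK b y : cell b 0 1 y -> iet b (iet_inv b y) = y.
Proof. by case/iet_invP. Qed.

Lemma iet_K b x : cell b 0 1 x -> iet_inv b (iet b x) = x.
Proof.
move=> x01; have [y01 yE] := iet_invP (iet_dom x01).
exact: iet_inj y01 x01 yE.
Qed.

Lemma iet_pow_dom b k x : cell b 0 1 x -> cell b 0 1 (iet_pow b k x).
Proof.
move=> x01; case: k => m /=; elim: m => [|m IH] //=;
  by [apply: iet_dom | apply: iet_inv_dom | apply: iet_inv_dom x01].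
Qed.

Lemma iet_pow_fix b x : cell b 0 1 x -> iet b x = x -> forall k, iet_pow b k x = x.
Proof.
move=> x01 fx; have fix_inv : iet_inv b x = x by rewrite -{1}fx iet_K.
by case=> m; rewrite /iet_pow iter_fix.
Qed.

Lemma iet_pow_succ b k x : cell b 0 1 x ->
  iet_pow b (k + 1) x = iet b (iet_pow b k x).
Proof.
move=> x01; case: k => [m|[|m]]; first by rewrite -PoszD addn1.
  by rewrite /= iet_invK.
have -> : (Negz m.+1 + 1 = Negz m)%R by rewrite !NegzE; lia.
by rewrite [RHS]/= iet_invK // (iet_pow_dom (Negz m)).
Qed.

Lemma iet_pow_pred b k x : cell b 0 1 x ->
  iet_pow b (k - 1) x = iet_inv b (iet_pow b k x).
Proof.
move=> x01; case: k => [[|m]|m] //.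
  have -> : (Posz m.+1 - 1 = Posz m)%R by lia.
  by rewrite [in RHS]/= iet_K // (iet_pow_dom (Posz m)).
by have -> : (Negz m - 1 = Negz m.+1)%R by rewrite !NegzE; lia.
Qed.

Lemma iet_pow_add b (j k : int) x : cell b 0 1 x ->
  iet_pow b (j + k) x = iet_pow b j (iet_pow b k x).
Proof.
move=> x01; have k01 := iet_pow_dom k x01.
case: j => m; elim: m => [|m IH].
- by rewrite add0r.
- have -> : (Posz m.+1 + k = (Posz m + k) + 1)%R by lia.
  by rewrite iet_pow_succ // IH.
- by rewrite NegzE addrC iet_pow_pred.
- have -> : (Negz m.+1 + k = (Negz m + k) - 1)%R by rewrite !NegzE; lia.
  by rewrite iet_pow_pred // IH.
Qed.

End Exchange.

Lemma common_radius (R : realFieldType) (Q : int -> R -> Prop) (N : nat) :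
  (forall k, exists2 e, 0 < e & forall d, 0 <= d < e -> Q k d) ->
  exists2 e, 0 < e & forall d, 0 <= d < e -> forall k : int, (absz k <= N)%N -> Q k d.
Proof.
move=> HQ; elim: N => [|N [e0 e0p He0]].
  have [e ep He] := HQ 0; exists e => // d Hd k.
  by rewrite leqn0 absz_eq0 => /eqP ->; apply: He.
have [e1 e1p He1] := HQ (Posz N.+1); have [e2 e2p He2] := HQ (Negz N).
exists (Num.min e0 (Num.min e1 e2)) => [|d]; first by rewrite !lt_min e0p e1p e2p.
rewrite !lt_min => /andP[d0 /and3P[de0 de1 de2]] [] m /=;
  rewrite leq_eqVlt ltnS => /orP[/eqP mN | mN].
- by rewrite mN; apply: He1; rewrite d0.
- by apply: (He0 _ _ (Posz m)); rewrite ?d0.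
- by case: mN => ->; apply: He2; rewrite d0.
- by apply: (He0 _ _ (Negz m)); rewrite ?d0.
Qed.

Section LocalTranslation.
Variables (R : realType) (n : nat) (a : 'I_n -> R) (tau : {perm 'I_n}).
Hypothesis a_gt0 : forall i, 0 < a i.
Hypothesis a_sum1 : \sum_(i < n) a i = 1.

Definition side_translation (b : bool) (f : R -> R) : Prop :=
  forall y, cell b 0 1 y ->
  exists2 e, 0 < e & forall d, 0 <= d < e -> f (y + push b d) = f y + push b d.

Lemma side_translation_comp b (f g : R -> R) :
  (forall y, cell b 0 1 y -> cell b 0 1 (g y)) ->
  side_translation b f -> side_translation b g -> side_translation b (f \o g).
Proof.
move=> g01 Hf Hg y y01; have [e1 e1p He1] := Hg y y01.
have [e2 e2p He2] := Hf (g y) (g01 y y01).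
exists (Num.min e1 e2) => [|d]; first by rewrite lt_min e1p e2p.
by rewrite !lt_min => /andP[d0 /andP[de1 de2]] /=; rewrite He1 ?d0 // He2 ?d0.
Qed.

Lemma iet_translation b : side_translation b (iet a tau b).
Proof.
move=> y /(cell_locate a_gt0 a_sum1) [i yi]; have [e ep He] := cell_push yi.
exists e => // d /He ydi; rewrite (iet_on tau a_gt0 ydi) (iet_on tau a_gt0 yi); lra.
Qed.

Lemma iet_inv_translation b : side_translation b (iet_inv a tau b).
Proof.
move=> y y01; have x01 := iet_inv_dom tau a_gt0 a_sum1 y01.
have [i xi] := cell_locate a_gt0 a_sum1 x01; have [e ep He] := cell_push xi.
exists e => // d /He xdi.
have <- : iet a tau b (iet_inv a tau b y + push b d) = y + push b d.
  rewrite (iet_on tau a_gt0 xdi) -{2}(iet_invK tau a_gt0 a_sum1 y01).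
  by rewrite (iet_on tau a_gt0 xi); lra.
exact (iet_K tau a_gt0 a_sum1 (cell_unit a_gt0 a_sum1 xdi)).
Qed.

Lemma iet_pow_translation b k : side_translation b (iet_pow a tau b k).
Proof.
have comp f m : side_translation b f ->
    side_translation b (iet_pow a tau b m) ->
    side_translation b (f \o iet_pow a tau b m).
  by apply: side_translation_comp => y; apply: iet_pow_dom.
have pow0 : side_translation b (iet_pow a tau b 0) by move=> y _; exists 1.
case: k => m; elim: m => [|m IH] //.
- exact: comp _ (Posz m) (@iet_translation b) IH.
- exact: comp _ 0 (@iet_inv_translation b) pow0.
- exact: comp _ (Negz m) (@iet_inv_translation b) IH.
Qed.

Definition itin_at (b : bool) (x : R) (k : int) (i : 'I_n) : bool :=
  cell b (bb a i) (bb a i.+1) (iet_pow a tau b k x).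

Lemma itin_at_uniq b x k (i j : 'I_n) : itin_at b x k i -> itin_at b x k j -> i = j.
Proof. exact: (@cell_uniq _ _ _ a_gt0 b i j). Qed.

Lemma itin_exists b x : cell b 0 1 x ->
  exists w : Omega n, forall k, itin_at b x k (w k).
Proof.
move=> x01.
have letter k := cell_locate a_gt0 a_sum1 (iet_pow_dom tau a_gt0 a_sum1 k x01).
by have [w Hw] := choice letter; exists (w : Omega n).
Qed.

Lemma itin_at_push b x k i : cell b 0 1 x -> itin_at b x k i ->
  exists2 e, 0 < e & forall d, 0 <= d < e -> itin_at b (x + push b d) k i.
Proof.
move=> x01 xki; have [e1 e1p He1] := @iet_pow_translation b k x x01.
have [e2 e2p He2] := cell_push xki.
exists (Num.min e1 e2) => [|d]; first by rewrite lt_min e1p e2p.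
by rewrite !lt_min => /andP[d0 /andP[de1 de2]]; rewrite /itin_at He1 ?d0 // He2 ?d0.
Qed.

Lemma itin_window b x (w : Omega n) (N : nat) : cell b 0 1 x ->
  (forall k, itin_at b x k (w k)) ->
  exists2 e, 0 < e & forall d, 0 <= d < e ->
    forall k : int, (absz k <= N)%N -> itin_at b (x + push b d) k (w k).
Proof. by move=> x01 Hw; apply: common_radius => k; apply: itin_at_push. Qed.

End LocalTranslation.

(* A point of R avoids every cut point b_j along its whole
   orbit, so T and ~T agree on that orbit and its two itineraries coincide. *)
Section GenericPoints.
Variables (R : realType) (n : nat) (a : 'I_n -> R) (tau : {perm 'I_n}).
Hypothesis a_gt0 : forall i, 0 < a i.
Hypothesis a_sum1 : \sum_(i < n) a i = 1.

Lemma n_gt0 : (0 < n)%N.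
Proof.
case: (posnP n) => // n0; move: a_sum1; rewrite big_pred0 => [/eqP|[i]].
  by rewrite eq_sym oner_eq0.
by rewrite n0.
Qed.

Lemma Dset_cut (j : nat) : (0 < j < n)%N -> Dset a (bb a j).
Proof. by case/andP => j0 jn; exists j => //=; apply/andP; split; lia. Qed.

(* The orbits of all cut points (including b_0 = 0) lie in D_oo: the
   preimage of 0 under T is a left endpoint b_i, and either i = 0 and 0 is
   fixed, or 0 is the image of the cut point b_i. *)
Lemma Dinf_cut_orbit (j : nat) (k : int) :
  (j < n)%N -> Dinf a tau (Tpow a tau k (bb a j)).
Proof.
move=> jn; case: (posnP j) => [-> | j_gt0]; last first.
  by right; exists k => //; exists (bb a j) => //; apply: Dset_cut; rewrite j_gt0.
have unit0 : cell true 0 1 (0 : R) by rewrite /= lexx ltr01.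
have [z01 Tz] := iet_invP tau a_gt0 a_sum1 unit0.
set z := iet_inv a tau true 0 in z01 Tz.
have [i zi] := cell_locate a_gt0 a_sum1 z01.
have zE : z = bb a i.
  have := bb_le (atau_gt0 tau a_gt0) (leq0n (tau i)); rewrite bb0 -bbtau_atau => b_ge0.
  by rewrite (iet_on tau a_gt0 zi) in Tz; move: zi => /= /andP[zl _]; lra.
rewrite bb0 Tpow_iet; case: (posnP i) => [i0 | i_gt0].
  have T0 : iet a tau true 0 = 0 by rewrite -{1}(bb0 a) -i0 -zE.
  by left; left; rewrite iet_pow_fix.
right; exists (k + 1) => //; exists z.
  by rewrite zE; apply: Dset_cut; rewrite i_gt0 /=.
by rewrite Tpow_iet iet_pow_add // -Tz.
Qed.

Definition off_cuts (x : R) : Prop :=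
  0 < x < 1 /\ forall j : nat, (j < n)%N -> x <> bb a j.

Lemma Rgood_unit y : Rgood a tau y -> 0 < y < 1.
Proof.
case=> /andP[y0 y1] notD.
have y0' : y != 0 by apply/eqP => E; apply: notD; left; left.
have y1' : y != 1 by apply/eqP => E; apply: notD; left; right.
by rewrite lt_neqAle eq_sym y0' y0 lt_neqAle y1' y1.
Qed.

Lemma Rgood_cell b y : Rgood a tau y -> cell b 0 1 y.
Proof. by move/Rgood_unit => /andP[y0 y1]; case: b; rewrite /= ?y0 ?y1 ?ltW. Qed.

Lemma Rgood_off_cuts y k : Rgood a tau y -> off_cuts (Tpow a tau k y).
Proof.
move=> yR; have y01 := Rgood_cell true yR.
have notcut j : (j < n)%N -> Tpow a tau k y <> bb a j.
  move=> jn E; case: yR => _; apply.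
  have -> : y = Tpow a tau (- k) (bb a j).
    by rewrite -E Tpow_iet -iet_pow_add // addNr.
  exact: Dinf_cut_orbit.
split=> //; have := iet_pow_dom tau a_gt0 a_sum1 k y01; rewrite /= => /andP[yk0 ->].
rewrite andbT lt_neqAle yk0 andbT; apply/eqP => E.
by apply: (notcut 0%N n_gt0); rewrite bb0 E.
Qed.

Lemma off_cuts_cell x (i : 'I_n) : off_cuts x ->
  cell true (bb a i) (bb a i.+1) x = cell false (bb a i) (bb a i.+1) x.
Proof.
case=> /andP[_ x1] notcut.
have xi : x != bb a i by apply/eqP/notcut.
have xi1 : x != bb a i.+1.
  case: (ltnP i.+1 n) => [in1 | ni]; first exact/eqP/notcut.
  by rewrite (bb_top a_sum1 ni) lt_eqF.
by rewrite !cell_interior.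
Qed.

Lemma iet_off_cuts x : off_cuts x -> iet a tau false x = iet a tau true x.
Proof.
move=> xoff; have [/andP[x0 x1] _] := xoff.
have x01 : cell true 0 1 x by rewrite /= ltW.
have [i xi] := cell_locate a_gt0 a_sum1 x01.
by rewrite (iet_on tau a_gt0 xi) (iet_on tau a_gt0 (b := false) (i := i)) -?off_cuts_cell.
Qed.

Lemma iet_inv_off_cuts p : cell true 0 1 p -> off_cuts (iet_inv a tau true p) ->
  iet_inv a tau false p = iet_inv a tau true p.
Proof.
move=> p01 qoff; have [/andP[q0 q1] _] := qoff.
rewrite -{1}(iet_invK tau a_gt0 a_sum1 p01) -iet_off_cuts // iet_K //.
by rewrite /= q0 ltW.
Qed.

Lemma Rgood_orbit y k : Rgood a tau y -> iet_pow a tau false k y = iet_pow a tau true k y.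
Proof.
move=> yR; case: k => m.
  elim: m => //= m IH; rewrite IH; exact: iet_off_cuts (Rgood_off_cuts (Posz m) yR).
have y01 := Rgood_cell true yR.
have neg01 l : cell true 0 1 (iter l (iet_inv a tau true) y).
  by case: l => [|l] //; apply: (iet_pow_dom tau a_gt0 a_sum1 (Negz l)).
suff negE l : iter l (iet_inv a tau false) y = iter l (iet_inv a tau true) y.
  exact: negE.
elim: l => //= l IH; rewrite IH iet_inv_off_cuts //.
exact: (Rgood_off_cuts (Negz l) yR).
Qed.

Lemma Rgood_itin_at b y (v : Omega n) : Rgood a tau y -> is_itin a tau y v ->
  forall k, itin_at a tau b y k (v k).
Proof.
move=> yR yv k; case: b; first exact: yv.
rewrite /itin_at Rgood_orbit // -off_cuts_cell; first exact: yv.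
exact: Rgood_off_cuts.
Qed.

Lemma Dinf_countable : countable (Dinf a tau).
Proof.
pose f (p : int * nat) := Tpow a tau p.1 (bb a p.2).
have sub : Dinf a tau `<=` f @` setT.
  move=> y [[->|->]|[k _ [d [m _ <-] <-]]].
  - by exists (0%R, 0%N) => //; rewrite /f /= bb0.
  - by exists (0%R, n) => //; rewrite /f /= (bb_top a_sum1).
  - by exists (k, m).
apply: sub_countable (subset_card_le sub) _.
exact: sub_countable (card_image_le f setT) (countableP _).
Qed.

(* Every nondegenerate subinterval of [0, 1] contains a generic point:
   otherwise it would be contained in the countable, hence null, set D_oo. *)
Lemma Rgood_dense u v : 0 <= u -> v <= 1 -> u < v ->
  exists2 y, u < y < v & Rgood a tau y.
Proof.
move=> u0 v1 uv; case: (pselect (exists2 y, u < y < v & Rgood a tau y)) => // noR.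
have sub : `]u, v[%classic `<=` Dinf a tau.
  move=> y; rewrite /= in_itv /= => /andP[uy yv].
  case: (pselect (Dinf a tau y)) => // yD; case: noR; exists y; first by rewrite uy yv.
  by split => //=; apply/andP; split; lra.
have := countable_lebesgue_measure0 (sub_countable (subset_card_le sub) Dinf_countable).
rewrite lebesgue_measure_itv /= lte_fin uv.
by move/eqP; rewrite -EFinB eqe subr_eq0 => /eqP; lra.
Qed.

Lemma Rgood_push b x e : cell b 0 1 x -> 0 < e ->
  exists2 d, 0 <= d < e & Rgood a tau (x + push b d).
Proof.
case: b => /= /andP[x0 x1] e_gt0.
- have [|||y /andP[xy ye] yR] := @Rgood_dense x (Num.min (x + e) 1) => //.
    by rewrite ge_min lexx orbT.
    by rewrite lt_min x1 ltrDl e_gt0.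
  exists (y - x); last by rewrite addrC subrK.
  by move: ye; rewrite lt_min => /andP[ye _]; apply/andP; split; lra.
- have [|||y /andP[ey yx] yR] := @Rgood_dense (Num.max (x - e) 0) x => //.
    by rewrite le_max lexx orbT.
    by rewrite gt_max x0 gtrBl e_gt0.
  exists (x - y); last by rewrite opprB addrC subrK.
  by move: ey; rewrite gt_max => /andP[ey _]; apply/andP; split; lra.
Qed.

End GenericPoints.

Section SymbolicTopology.
Variable n : nat.

Lemma coord_nbhs (w : Omega n) (k : int) : nbhs w [set v : Omega n | v k = w k].
Proof.
exact: (@proj_continuous int (fun _ => discrete_topology 'I_n) k w _ (discrete_set1 _)).
Qed.

Lemma cylinder_nbhs (w : Omega n) (N : nat) :
  nbhs w [set v : Omega n | forall k : int, (absz k <= N)%N -> v k = w k].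
Proof.
elim: N => [|N IH].
  by apply: filterS (coord_nbhs w 0) => v /= v0 k; rewrite leqn0 absz_eq0 => /eqP ->.
apply: filterS (filterI (filterI IH (coord_nbhs w (Posz N.+1))) (coord_nbhs w (Negz N))).
move=> v /= [[vN vN1] vN2] [] m /=; rewrite leq_eqVlt ltnS => /orP[/eqP mN | mN].
- by rewrite mN.
- exact: (vN (Posz m)).
- by case: mN => ->.
- exact: (vN (Negz m)).
Qed.

Lemma closure_windows (A : set (Omega n)) (w : Omega n) :
  (forall N : nat, exists v, A v /\ forall k : int, (absz k <= N)%N -> v k = w k) ->
  closure A w.
Proof.
move=> HA; have [u Hu] := choice HA.
have u_cvg : u @ \oo --> w.
  apply/(@pointwise_cvgP (discrete_topology int) (discrete_topology 'I_n)) => k.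
  apply/discrete_cvg; apply: filterS (nbhs_infty_ge (absz k)) => m km.
  exact: (Hu m).2.
move=> B Bw; have Bu : \forall m \near \oo, B (u m) by exact: u_cvg.
have [m Bum] := filter_ex Bu.
by exists (u m); split => //; case: (Hu m).
Qed.

End SymbolicTopology.

Section Subshift.
Variables (R : realType) (n : nat) (a : 'I_n -> R) (tau : {perm 'I_n}).
Hypothesis a_gt0 : forall i, 0 < a i.
Hypothesis a_sum1 : \sum_(i < n) a i = 1.

Lemma itin_window_generic b x (w : Omega n) (N : nat) : cell b 0 1 x ->
  (forall k, itin_at a tau b x k (w k)) ->
  exists v, X0 a tau v /\ forall k : int, (absz k <= N)%N -> v k = w k.
Proof.
move=> x01 xw; have [e e_gt0 He] := itin_window a_gt0 a_sum1 N x01 xw.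
have [d de yR] := Rgood_push tau a_sum1 x01 e_gt0.
have [v yv] := itin_exists tau a_gt0 a_sum1 (Rgood_cell true yR).
exists v; split; first by exists (x + push b d).
move=> k kN; apply: (itin_at_uniq a_gt0 (Rgood_itin_at a_gt0 a_sum1 b yR yv k)).
exact: He.
Qed.

Lemma itin_in_X b x (w : Omega n) : cell b 0 1 x ->
  (forall k, itin_at a tau b x k (w k)) -> Xsub a tau w.
Proof. by move=> x01 xw; apply: closure_windows => N; apply: itin_window_generic xw. Qed.

Lemma separation_near b x (w : Omega n) : 0 <= x <= 1 ->
  (cell b 0 1 x -> ~ forall k, itin_at a tau b x k (w k)) ->
  exists k0, exists2 e, 0 < e & forall d, 0 <= d < e -> forall v : Omega n,
    Rgood a tau (x + push b d) -> is_itin a tau (x + push b d) v -> v k0 <> w k0.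
Proof.
case/andP => x0 x1 notw; case: (boolP (cell b 0 1 x)) => [x01 | xn01]; last first.
  exists 0%R, 1 => // d /andP[d0 d1] v /Rgood_unit /andP[y0 y1].
  exfalso; move/negP: xn01; apply; clear notw.
  by case: b y0 y1 => /= y0 y1; apply/andP; split; lra.
have [k0 /= not_k0] := (existsNP _).2 (notw x01).
have [wx xwx] := itin_exists tau a_gt0 a_sum1 x01.
have [e e_gt0 He] := itin_at_push a_gt0 a_sum1 x01 (xwx k0).
exists k0, e => // d /He ydk0 v yR yv vw; apply: not_k0.
by rewrite -vw (itin_at_uniq a_gt0 (Rgood_itin_at a_gt0 a_sum1 b yR yv k0) ydk0).
Qed.

(* The local separations from both
   sides of every point of the compact interval [0, 1] combine by compactness. *)
Lemma separation_uniform (w : Omega n) :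
  ~ (Itin a tau (@dom0 R) `|` Itint a tau (@dom1 R)) w ->
  exists N : nat, forall y, Rgood a tau y -> forall v : Omega n,
    is_itin a tau y v -> exists2 k : int, (absz k <= N)%N & v k <> w k.
Proof.
move=> notw.
pose sep (N : nat) (y : R) := Rgood a tau y -> forall v : Omega n,
  is_itin a tau y v -> exists2 k : int, (absz k <= N)%N & v k <> w k.
suff: \forall N \near \oo, `[(0 : R), 1]%classic `<=` sep N.
  case/filter_ex => N HN; exists N => y yR; apply: (HN y _ yR).
  by rewrite /= in_itv /=; case/andP: (Rgood_unit yR) => y0 y1; rewrite !ltW.
apply: ((compact_near_coveringP `[(0 : R), 1]%classic).1 (@segment_compact R 0 1)) => x.
rewrite /= in_itv /= => x01.
have not_itin b : cell b 0 1 x -> ~ forall k, itin_at a tau b x k (w k).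
  by case: b => xb xw; apply: notw; [left | right]; exists x.
have [kR [eR eR_gt0 HR]] := separation_near x01 (not_itin true).
have [kL [eL eL_gt0 HL]] := separation_near x01 (not_itin false).
near=> y N => yR v yv.
have /andP[yxR yxL] : (`|x - y| < eR) && (`|x - y| < eL).
  by rewrite -lt_min; near: y; apply: nbhsx_ballx; rewrite lt_min eR_gt0 eL_gt0.
have kN : (maxn (absz kR) (absz kL) <= N)%N by near: N; apply: nbhs_infty_ge.
case: (leP x y) => xy.
- exists kR; first exact: leq_trans (leq_maxl _ _) kN.
  have dR : 0 <= y - x < eR.
    by have := ler_norm (y - x); rewrite distrC => ?; apply/andP; split; lra.
  have yE : x + push true (y - x) = y by rewrite /= addrC subrK.
  by apply: (HR _ dR v); rewrite yE.
- exists kL; first exact: leq_trans (leq_maxr _ _) kN.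
  have dL : 0 <= x - y < eL.
    by have := ler_norm (x - y) => ?; apply/andP; split; lra.
  have yE : x + push false (x - y) = y by rewrite /= opprB addrC subrK.
  by apply: (HL _ dL v); rewrite yE.
Unshelve. all: by end_near.
Qed.

Lemma X_in_itin (w : Omega n) : Xsub a tau w ->
  (Itin a tau (@dom0 R) `|` Itint a tau (@dom1 R)) w.
Proof.
move=> wX; apply: contrapT => notw.
have [N HN] := separation_uniform notw.
have [v [[y yR yv] vw]] := wX _ (cylinder_nbhs w N).
by have [k kN []] := HN y yR v yv; apply: vw.
Qed.

End Subshift.

Theorem theorem4p2 (R : realType) (n : nat) (a : 'I_n -> R) (tau : {perm 'I_n}) :
  (2 <= n)%N ->
  (forall i, 0 < a i) ->
  \sum_(i < n) a i = 1 ->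
  Xsub a tau = Itin a tau (@dom0 R) `|` Itint a tau (@dom1 R).
Proof.
move=> _ a_gt0 a_sum1; apply/seteqP; split => w.
  exact: X_in_itin a_gt0 a_sum1 w.
case=> -[x x01 xw].
- exact: (itin_in_X a_gt0 a_sum1 (b := true) x01 xw).
- exact: (itin_in_X a_gt0 a_sum1 (b := false) x01 xw).
Qed.
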